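(* Fix an integer $k\ge3$ and consider the utility function described in the context. Suppose every $k$-star network is pairwise stable, where this ranges over all numbers of nodes $n\ge 2k$ and all allowed distributions of leaves. Then necessarily $$\gamma=0 \quad\text{and}\quad c=b_1-b_3.$$
   Context: A $k$-star network ($k\ge3$) on $n\ge 2k$ nodes consists of $k$ ''center'' nodes that are pairwise adjacent, forming a clique. Every other node is a leaf adjacent to exactly one center and to nothing else. Each center has at least one leaf, and the numbers of leaves of any two centers differ by at most one. Networks are finite simple undirected graphs whose vertices (nodes) are self-interested agents. Parameters: benefits $b_1>b_2>b_3>b_4>\dots>0$, where $b_i$ is the benefit a node obtains from a node at distance $i$; a link cost $c$ per immediate neighbor; and an intermediation fraction $\gamma$ with $0\le\gamma<1$. (Entry fees play no role here, since all nodes are already in the network.) Notation: $N$ is the set of nodes, $d_j$ the degree of $j$, and $l(j,w)$ the graph distance. A node $x$ is essential for a pair $y,z$ (with $x\notin\{y,z\}$) if $x$ lies on every path joining $y$ and $z$. Write $E(y,z)$ for the set of nodes essential for $y,z$ and $e(y,z)=|E(y,z)|$. Only pairs joined by a path contribute to the sums below. Utility of node $j$ in network $g$: $$u_j(g)=d_j(b_1-c)+\sum_{w\in N,\ l(j,w)>1}b_{l(j,w)}-\sum_{w\in N,\ E(j,w)\ne\emptyset}\gamma\, b_{l(j,w)}+\sum_{y,z\in N,\ j\in E(y,z)}\frac{\gamma}{e(y,z)}\,2\,b_{l(y,z)}.$$ Pairwise stability: $g$ is pairwise stable if (a) for every link $(i,j)\in g$, $u_i(g\setminus\{(i,j)\})\le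 u_i(g)$ and $u_j(g\setminus\{(i,j)\})\le u_j(g)$; and (b) for every non-link $(i,j)\notin g$, if $u_i(g\cup\{(i,j)\})>u_i(g)$ then $u_j(g\cup\{(i,j)\})<u_j(g)$. *)

From HB Require Import structures.
From mathcomp Require Import all_boot all_order all_algebra.
Set Implicit Arguments. Unset Strict Implicit. Unset Printing Implicit Defensive.
Import Order.TTheory GRing.Theory Num.Theory.

Definition simple_graph (n : nat) (g : rel 'I_n) : Prop :=
  (forall x y, g x y = g y x) /\ (forall x, ~~ g x x).

Definition add_link n (g : rel 'I_n) (i j : 'I_n) : rel 'I_n :=
  fun x y => [|| g x y, (x == i) && (y == j) | (x == j) && (y == i)].
Definition del_link n (g : rel 'I_n) (i j : 'I_n) : rel 'I_n :=
  fun x y => g x y && ~~ (((x == i) && (y == j)) || ((x == j) && (y == i))).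

Definition degree n (g : rel 'I_n) (j : 'I_n) : nat := #|[set v | g j v]|.

Definition joined n (g : rel 'I_n) (y z : 'I_n) : bool := connect g y z.

Fixpoint walk_len n (g : rel 'I_n) (m : nat) (x y : 'I_n) : bool :=
  match m with
  | 0 => x == y
  | m'.+1 => [exists v, g x v && walk_len g m' v y]
  end.

(* graph distance: least m with a walk of length m (meaningful for joined pairs;
   such an m is always < n) *)
Definition dist n (g : rel 'I_n) (x y : 'I_n) : nat :=
  find (fun m => walk_len g m x y) (iota 0 n).

(* x is essential for y,z: x not in {y,z} and x lies on every path from y to z,
   i.e. there is no path from y to z avoiding x *)
Definition essential n (g : rel 'I_n) (x y z : 'I_n) : bool :=
  [&& x != y, x != z & ~~ connect (fun u v => g u v && (v != x)) y z].

Definition Eset n (g : rel 'I_n) (y z : 'I_n) : {set 'I_n} :=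
  [set x | essential g x y z].

Local Open Scope ring_scope.

Definition utility (R : realFieldType) (b : nat -> R) (c gam : R)
    n (g : rel 'I_n) (j : 'I_n) : R :=
  (degree g j)%:R * (b 1%N - c)
  + \sum_(w : 'I_n | joined g j w && (1 < dist g j w)%N) b (dist g j w)
  - \sum_(w : 'I_n | joined g j w && (Eset g j w != set0)) gam * b (dist g j w)
  + \sum_(y : 'I_n) \sum_(z : 'I_n | [&& (y < z)%N, joined g y z & j \in Eset g y z])
       gam / (#|Eset g y z|)%:R * 2 * b (dist g y z).

Definition pairwise_stable (R : realFieldType) (b : nat -> R) (c gam : R)
    n (g : rel 'I_n) : Prop :=
  (forall i j : 'I_n, g i j ->
     utility b c gam (del_link g i j) i <= utility b c gam g i /\
     utility b c gam (del_link g i j) j <= utility b c gam g j) /\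
  (forall i j : 'I_n, i != j -> ~~ g i j ->
     utility b c gam g i < utility b c gam (add_link g i j) i ->
     utility b c gam (add_link g i j) j < utility b c gam g j).

Definition leaves n (g : rel 'I_n) (C : {set 'I_n}) (cc : 'I_n) : nat :=
  #|[set l | (l \notin C) && g cc l]|.

Definition k_star (k n : nat) (g : rel 'I_n) : Prop :=
  exists C : {set 'I_n},
    [/\ #|C| = k,
        (forall u v, u \in C -> v \in C -> u != v -> g u v),
        (forall l, l \notin C -> exists2 cc, cc \in C & forall v, g l v = (v == cc)),
        (forall cc, cc \in C -> (0 < leaves g C cc)%N) &
        (forall cc cc', cc \in C -> cc' \in C -> (leaves g C cc <= (leaves g C cc').+1)%N)].

(* Let S be the k-star on 2k nodes in which each centre C i carries exactly
   one leaf L i.  Its pairwise stability is tested against two deviations: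
   - the leaves L p and L q create a link.  Both endpoints gain the same
     amount, so stability forces this gain to be nonpositive:
       (V)  (b1 - c) - b3 + gam ((k-1) b2 + b3) <= 0;
   - the centre C p severs its link to C q.  This must not profit C p:
       (W)  c - b1 + b3 - gam (2 b2 + b3) + gam b4 / k <= 0.
   Adding (V) and (W) gives gam ((k-3) b2 + b4 / k) <= 0, hence gam = 0, and
   then (V) and (W) together say c = b1 - b3.
   Each gain is bounded by estimating the utility of the deviating node
   before and after, part by part; distances in the (modified) star are
   bounded above by explicit walks and below by explicit potentials. *)

From HB Require Import structures.
From mathcomp Require Import all_boot all_order all_algebra.
From mathcomp Require Import zify ring lra.
From Stdlib Require Import FunctionalExtensionality.
Set Implicit Arguments. Unset Strict Implicit. Unset Printing Implicit Defensive.
Import Order.TTheory GRing.Theory Num.Theory.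

Section Walks.
Variables (n : nat) (h : rel 'I_n).

Lemma walk1 x y : h x y -> walk_len h 1 x y.
Proof. by move=> hxy; apply/existsP; exists y; rewrite hxy /=. Qed.

Lemma walkS m x v y : h x v -> walk_len h m v y -> walk_len h m.+1 x y.
Proof. by move=> hxv w; apply/existsP; exists v; rewrite hxv. Qed.

Lemma walk_connect m x y : walk_len h m x y -> connect h x y.
Proof.
elim: m x => [|m IH] x /=; first by move/eqP->.
by case/existsP=> v /andP[hxv /IH]; apply: connect_trans; exact: connect1.
Qed.

Lemma walk_mono (h' : rel 'I_n) m x y :
  subrel h h' -> walk_len h m x y -> walk_len h' m x y.
Proof.
move=> sub; elim: m x => [|m IH] x //=.
by case/existsP=> v /andP[hxv /IH w]; apply/existsP; exists v; rewrite w sub.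
Qed.

Lemma walkS_last m x y :
  walk_len h m.+1 x y = [exists v, walk_len h m x v && h v y].
Proof.
elim: m x => [|m IH] x.
  apply/existsP/existsP => [[v /andP[hxv /eqP <-]]|[v /andP[/eqP <- hvy]]].
    by exists x; rewrite /= eqxx.
  by exists y; rewrite /= eqxx andbT.
have -> : walk_len h m.+2 x y = [exists v, h x v && walk_len h m.+1 v y] by [].
apply/existsP/existsP => [[v /andP[hxv]]|[w /andP[]]].
  rewrite IH => /existsP[w /andP[w1 w2]]; exists w; rewrite w2 andbT /=.
  by apply/existsP; exists v; rewrite hxv.
move=> /existsP[v /andP[hxv w1]] hwy; exists v; rewrite hxv IH.
by apply/existsP; exists w; apply/andP; split.
Qed.

Lemma walk_sym m x y : symmetric h -> walk_len h m x y = walk_len h m y x.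
Proof.
move=> hs; elim: m x y => [|m IH] x y; first by rewrite /= eq_sym.
rewrite walkS_last.
have -> : walk_len h m.+1 y x = [exists v, h y v && walk_len h m v x] by [].
apply/existsP/existsP => [[v /andP[w1 w2]]|[v /andP[w1 w2]]].
  by exists v; rewrite hs -IH w1 andbT.
by exists v; rewrite hs IH w2.
Qed.

Lemma dist_sym x y : symmetric h -> dist h x y = dist h y x.
Proof. by move=> hs; apply: eq_find => m; apply: walk_sym. Qed.

Lemma dist_ub m x y : (m < n)%N -> walk_len h m x y -> (dist h x y <= m)%N.
Proof.
move=> mn w; rewrite /dist leqNgt; apply/negP => lt.
by have := before_find 0%N lt; rewrite nth_iota // add0n w.
Qed.

(* A potential D vanishing on the diagonal and growing by at most one along
   each edge bounds the distance from below. *)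
Section Potential.
Variable D : 'I_n -> 'I_n -> nat.
Hypothesis D_diag : forall y, D y y = 0%N.
Hypothesis D_edge : forall x v y, h x v -> (D x y <= (D v y).+1)%N.

Lemma walk_pot m x y : walk_len h m x y -> (D x y <= m)%N.
Proof.
elim: m x => [|m IH] x /=; first by move/eqP->; rewrite D_diag.
by case/existsP=> v /andP[hxv /IH w]; apply: leq_trans (D_edge y hxv) _.
Qed.

Lemma dist_lb x y : (D x y <= n)%N -> (D x y <= dist h x y)%N.
Proof.
move=> Dn; rewrite /dist.
have [H|H] := boolP (has (fun m => walk_len h m x y) (iota 0 n)).
  have := nth_find 0%N H; rewrite nth_iota; last by move: H; rewrite has_find size_iota.
  by rewrite add0n; apply: walk_pot.
move: H; rewrite has_find size_iota -leqNgt => H.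
by rewrite (@leq_trans n) // find_size // size_iota.
Qed.
End Potential.

Lemma dist_pos x y : x != y -> (0 < dist h x y)%N.
Proof.
move=> xy; have := @dist_lb (fun u v => (u != v : nat)) _ _ x y.
rewrite xy; apply=> [z|u v z _|]; first by rewrite eqxx.
  by case: (u != z); case: (v != z).
exact: leq_ltn_trans (leq0n x) (ltn_ord x).
Qed.

End Walks.
Arguments walkS {n h m x} v {y}.

Definition avoid n (h : rel 'I_n) (x : 'I_n) : rel 'I_n :=
  fun u v => h u v && (v != x).

Section Essential.
Variables (n : nat) (h : rel 'I_n).

Lemma inEset x y z :
  (x \in Eset h y z) = [&& x != y, x != z & ~~ connect (avoid h x) y z].
Proof. by rewrite inE. Qed.

Lemma avoid_edge x u v : h u v -> v != x -> connect (avoid h x) u v.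
Proof. by move=> huv vx; apply: connect1; rewrite /avoid huv vx. Qed.

Lemma Eset_refl y : Eset h y y = set0.
Proof. by apply/setP => x; rewrite inEset connect0 !andbF inE. Qed.

Lemma Eset_adj y z : h y z -> Eset h y z = set0.
Proof.
move=> hyz; apply/setP => x; rewrite inEset inE.
have [->|xz] := eqVneq x z; first by rewrite /= andbF.
by rewrite avoid_edge ?andbF // eq_sym.
Qed.

Lemma Eset_neq x y z : x \in Eset h y z -> y != z.
Proof. by apply: contraTneq => ->; rewrite Eset_refl inE. Qed.

Lemma avoid_connect_sym x y z : symmetric h ->
  y != x -> z != x -> connect (avoid h x) y z -> connect (avoid h x) z y.
Proof.
move=> hs yx zx /connectP[p pp zl].
pose e := fun u v => [&& h u v, u != x & v != x].
have e_sym : symmetric e by move=> u v; rewrite /e hs [(u != x) && _]andbC.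
have ep : forall y, y != x -> path (avoid h x) y p -> path e y p.
  elim: p {pp zl} => //= v p IH u ux /andP[/andP[huv vx] pp].
  by rewrite /e huv ux vx /= IH.
have : connect e y z by apply/connectP; exists p; first exact: ep.
rewrite (sym_connect_sym e_sym); apply: connect_sub => u v /and3P[huv _ vx].
exact: avoid_edge.
Qed.

Lemma Eset_sym y z : symmetric h -> Eset h y z = Eset h z y.
Proof.
move=> hs; apply/setP => x; rewrite !inEset.
have [->|xy] := eqVneq x y; first by rewrite /= ?andbF.
have [->|xz] := eqVneq x z; first by rewrite /= ?andbF.
by congr (~~ _); apply/idP/idP; apply: avoid_connect_sym; rewrite // eq_sym.
Qed.

Lemma Eset_leaf a r y : (forall v, h a v = (v == r)) ->
  a != r -> y != a -> y != r -> r \in Eset h a y.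
Proof.
move=> ha ar ya yr; rewrite inEset eq_sym (eq_sym r) yr ar /=.
apply/negP => /connectP[[|v p] /= pp yl]; first by rewrite yl eqxx in ya.
by move: pp; rewrite /avoid ha => /andP[/andP[/eqP -> ]]; rewrite eqxx.
Qed.

Lemma Eset_sub y z (S : {set 'I_n}) :
  (forall x, x \notin S -> x != y -> x != z -> connect (avoid h x) y z) ->
  Eset h y z \subset S.
Proof.
move=> H; apply/subsetP => x; rewrite inEset => /and3P[xy xz nc].
by apply/negPn/negP => xS; rewrite H in nc.
Qed.

End Essential.

Local Open Scope ring_scope.

Section Sums.
Variable R : numDomainType.

Lemma sum_pt n (p : 'I_n) (w : R) : \sum_(i < n) (if i == p then w else 0) = w.
Proof. by rewrite -big_mkcond big_pred1_eq. Qed.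

Lemma sum_if1 n (p : 'I_n) (x y : R) :
  \sum_(i < n) (if i == p then x else y) = x + (n%:R - 1) * y.
Proof.
rewrite (eq_bigr (fun i => (if i == p then x - y else 0) + y)); last first.
  by move=> i _; case: (i == p); rewrite ?subrK ?add0r.
by rewrite big_split /= sum_pt sumr_const card_ord -mulr_natl; ring.
Qed.

Lemma sum_if2 n (p q : 'I_n) (x y z : R) : p != q ->
  \sum_(i < n) (if i == p then x else if i == q then y else z)
  = x + y + (n%:R - 2) * z.
Proof.
move=> pq; rewrite (eq_bigr (fun i => (if i == p then x - z else 0)
                                     + (if i == q then y - z else 0) + z)).
  by rewrite !big_split /= !sum_pt sumr_const card_ord -mulr_natl; ring.
move=> i _; have [->|_] := eqVneq i p; first by rewrite (negbTE pq) /=; ring.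
by case: (i == q) => /=; ring.
Qed.

Lemma sum_ne0 n (a : 'I_n) (H : 'I_n -> R) : H a = 0 ->
  \sum_(x | x != a) H x = \sum_x H x.
Proof. by move=> Ha; rewrite [RHS](bigD1 a) //= Ha add0r. Qed.

Lemma sum_pairs_through n (a : 'I_n) (H : 'I_n -> R) :
  \sum_(y : 'I_n) \sum_(z : 'I_n | (y < z)%N)
      (if y == a then H z else if z == a then H y else 0)
  = \sum_(x | x != a) H x.
Proof.
have inner y : y != a ->
    \sum_(z : 'I_n | (y < z)%N) (if y == a then H z else if z == a then H y else 0)
    = if (y < a)%N then H y else 0.
  move=> ya; rewrite (negbTE ya) big_mkcond /=.
  rewrite (eq_bigr (fun z : 'I_n => if z == a then (if (y < a)%N then H y else 0) else 0)).
    by rewrite -big_mkcond big_pred1_eq.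
  by move=> z _; have [->|] := eqVneq z a; case: (y < z)%N; case: (y < a)%N.
rewrite (bigD1 a) //= eqxx (eq_bigr _ inner).
rewrite [RHS](eq_bigr (fun x : 'I_n => (if (x < a)%N then H x else 0)
                                      + (if (a < x)%N then H x else 0))); last first.
  move=> x xa; case: ltngtP => //; [by rewrite addr0|by rewrite add0r|].
  by move=> /val_inj e; rewrite e eqxx in xa.
rewrite big_split /= addrC; congr (_ + _).
rewrite [RHS]big_mkcond [LHS]big_mkcond /=; apply: eq_bigr => x _.
by have [->|] := eqVneq x a; rewrite ?ltnn.
Qed.

Section PairComparison.
Variables (n : nat) (cond : 'I_n -> 'I_n -> bool) (F : 'I_n -> 'I_n -> R).
Variables (a : 'I_n) (H : 'I_n -> R).
Let through (y z : 'I_n) : R := if y == a then H z else if z == a then H y else 0.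

Lemma sum_pairs_le :
  (forall y z : 'I_n, (y < z)%N -> (if cond y z then F y z else 0) <= through y z) ->
  \sum_(y : 'I_n) \sum_(z : 'I_n | (y < z)%N && cond y z) F y z <= \sum_(x | x != a) H x.
Proof.
move=> Hyz; rewrite -sum_pairs_through; apply: ler_sum => y _.
by rewrite big_mkcondr /=; apply: ler_sum => z yz; apply: Hyz.
Qed.

Lemma sum_pairs_ge :
  (forall y z : 'I_n, (y < z)%N -> through y z <= (if cond y z then F y z else 0)) ->
  \sum_(x | x != a) H x <= \sum_(y : 'I_n) \sum_(z : 'I_n | (y < z)%N && cond y z) F y z.
Proof.
move=> Hyz; rewrite -sum_pairs_through; apply: ler_sum => y _.
by rewrite big_mkcondr /=; apply: ler_sum => z yz; apply: Hyz.
Qed.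
End PairComparison.

End Sums.

Section UtilityParts.
Variables (R : realFieldType) (b : nat -> R) (gam : R) (n : nat) (g : rel 'I_n).

Definition benefit_term (j w : 'I_n) : R :=
  if joined g j w && (1 < dist g j w)%N then b (dist g j w) else 0.

Definition fee_term (j w : 'I_n) : R :=
  if joined g j w && (Eset g j w != set0) then gam * b (dist g j w) else 0.

Definition rent_term (j y z : 'I_n) : R :=
  if joined g y z && (j \in Eset g y z)
  then gam / (#|Eset g y z|)%:R * 2 * b (dist g y z) else 0.

Definition rents (j : 'I_n) : R :=
  \sum_(y : 'I_n) \sum_(z : 'I_n | [&& (y < z)%N, joined g y z & j \in Eset g y z])
    gam / (#|Eset g y z|)%:R * 2 * b (dist g y z).

Lemma utilityE c j : utility b c gam g j =
  (degree g j)%:R * (b 1%N - c) + \sum_w benefit_term j w - \sum_w fee_term j w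
  + rents j.
Proof. by rewrite /benefit_term /fee_term -!big_mkcond. Qed.

Lemma degreeE j : ((degree g j)%:R : R) = \sum_v (if g j v then 1 else 0).
Proof.
rewrite /degree -sum1_card natr_sum big_mkcond; apply: eq_bigr => v _.
by rewrite inE; case: (g j v).
Qed.

Lemma rents_pairs j : rents j = \sum_(y : 'I_n) \sum_(z : 'I_n | (y < z)%N &&
  (joined g y z && (j \in Eset g y z))) gam / (#|Eset g y z|)%:R * 2 * b (dist g y z).
Proof. by []. Qed.

Lemma rent_term_sym j y z : symmetric g -> rent_term j y z = rent_term j z y.
Proof.
move=> gs; rewrite /rent_term /joined (sym_connect_sym gs).
by rewrite (Eset_sym _ _ gs) (dist_sym _ _ gs).
Qed.

Hypothesis b_decr : forall i : nat, (0 < i)%N -> b i.+1 < b i.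
Hypothesis b_pos : forall i : nat, (0 < i)%N -> 0 < b i.
Hypothesis gam_ge0 : 0 <= gam.

Lemma b_anti i j : (0 < i)%N -> (i <= j)%N -> b j <= b i.
Proof.
move=> i0; elim: j => [|j IH]; first by rewrite leqn0 => /eqP i0'; rewrite i0' in i0.
rewrite leq_eqVlt => /orP[/eqP ->//|]; rewrite ltnS => ij.
by apply: le_trans (IH ij); apply/ltW/b_decr; exact: leq_trans ij.
Qed.

Lemma benefit_term_near j w : (dist g j w <= 1)%N -> benefit_term j w = 0.
Proof. by rewrite /benefit_term ltnNge => ->; rewrite andbF. Qed.

Lemma benefit_term_ge0 j w : 0 <= benefit_term j w.
Proof.
rewrite /benefit_term; case: ifP => // /andP[_ d1].
by apply/ltW/b_pos; exact: ltn_trans d1.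
Qed.

Lemma benefit_term_le j w m : (0 < m)%N -> (m <= dist g j w)%N ->
  benefit_term j w <= b m.
Proof.
move=> m0 md; rewrite /benefit_term; case: ifP => _; first exact: b_anti.
exact/ltW/b_pos.
Qed.

Lemma benefit_term_ge j w m : joined g j w -> (1 < dist g j w)%N ->
  (dist g j w <= m)%N -> b m <= benefit_term j w.
Proof.
move=> jw d1 dm; rewrite /benefit_term jw d1 /=.
by apply: b_anti => //; exact: ltn_trans d1.
Qed.

Lemma fee_term_0 j w : Eset g j w = set0 -> fee_term j w = 0.
Proof. by rewrite /fee_term => ->; rewrite eqxx andbF. Qed.

Lemma fee_term_ge0 j w : 0 <= fee_term j w.
Proof.
rewrite /fee_term; case: ifP => // /andP[_ /set0Pn[x /Eset_neq jw]].
by apply: mulr_ge0 => //; apply/ltW/b_pos/dist_pos.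
Qed.

Lemma fee_term_le j w m : (0 < m)%N -> (m <= dist g j w)%N ->
  fee_term j w <= gam * b m.
Proof.
move=> m0 md; rewrite /fee_term; case: ifP => _.
  by apply: ler_wpM2l => //; exact: b_anti.
by apply: mulr_ge0 => //; exact/ltW/b_pos.
Qed.

Lemma fee_term_ge j w x m : joined g j w -> x \in Eset g j w ->
  (dist g j w <= m)%N -> gam * b m <= fee_term j w.
Proof.
move=> jw xE dm; rewrite /fee_term jw; have -> : Eset g j w != set0 by apply/set0Pn; exists x.
by apply: ler_wpM2l => //; apply: b_anti => //; exact/dist_pos/Eset_neq/xE.
Qed.

Lemma rent_term_0 j y z : j \notin Eset g y z -> rent_term j y z = 0.
Proof. by rewrite /rent_term => /negbTE ->; rewrite andbF. Qed.

Lemma rent_term_ge0 j y z : 0 <= rent_term j y z.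
Proof.
rewrite /rent_term; case: ifP => // /andP[_ /Eset_neq yz].
by rewrite !mulr_ge0 // ?invr_ge0 // ltW // b_pos // dist_pos.
Qed.

Lemma rents_ge0 j : 0 <= rents j.
Proof.
apply: sumr_ge0 => y _; apply: sumr_ge0 => z /and3P[_ yz jE].
by have := rent_term_ge0 j y z; rewrite /rent_term yz jE.
Qed.

Lemma rent_term_le j y z m e : (0 < m)%N -> (m <= dist g y z)%N ->
  (0 < e)%N -> (e <= #|Eset g y z|)%N -> rent_term j y z <= gam / e%:R * 2 * b m.
Proof.
move=> m0 md e0 eE; rewrite /rent_term; case: ifP => _; last first.
  by rewrite !mulr_ge0 // ?invr_ge0 // ltW // b_pos.
rewrite -!mulrA; apply: ler_wpM2l => //; apply: ler_pM.
- by rewrite invr_ge0.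
- by rewrite mulr_ge0 // ltW // b_pos // (leq_trans m0 md).
- by rewrite lef_pV2 ?posrE ?ltr0n ?ler_nat // (leq_trans e0 eE).
- by apply: ler_wpM2l => //; exact: b_anti.
Qed.

Lemma rent_term_ge j y z m e : joined g y z -> j \in Eset g y z ->
  (dist g y z <= m)%N -> (#|Eset g y z| <= e)%N -> gam / e%:R * 2 * b m <= rent_term j y z.
Proof.
move=> jyz jE dm eE; rewrite /rent_term jyz jE -!mulrA.
have E0 : (0 < #|Eset g y z|)%N by apply/card_gt0P; exists j.
have d0 := dist_pos g (Eset_neq jE).
apply: ler_wpM2l => //; apply: ler_pM.
- by rewrite invr_ge0.
- by rewrite mulr_ge0 // ltW // b_pos // (leq_trans d0 dm).
- by rewrite lef_pV2 ?posrE ?ltr0n ?ler_nat // (leq_trans E0 eE).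
- by apply: ler_wpM2l => //; exact: b_anti.
Qed.

End UtilityParts.

(** * The k-star with one leaf per centre *)

Definition C k (i : 'I_k) : 'I_(k + k) := lshift k i.
Definition L k (i : 'I_k) : 'I_(k + k) := rshift k i.

(* Centres form a clique and the leaf L i hangs on the centre C i. *)
Definition star k : rel 'I_(k + k) := fun x y =>
  match split x, split y with
  | inl i, inl j => i != j
  | inl i, inr j | inr i, inl j => i == j
  | inr _, inr _ => false
  end.

Ltac eqcases := repeat (match goal with |- context [?a == ?b] =>
  case: (@eqVneq _ a b) => [?|?]; try subst => //= end);
  try (match goal with H : is_true (?a != ?a) |- _ => by rewrite eqxx in H end).

Section Star.
Variable k : nat.
Implicit Types (i j : 'I_k) (x y z : 'I_(k + k)).

Lemma splitC i : split (C i) = inl i. Proof. exact: (unsplitK (inl i)). Qed.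
Lemma splitL i : split (L i) = inr i. Proof. exact: (unsplitK (inr i)). Qed.

Lemma starCC i j : star (C i) (C j) = (i != j). Proof. by rewrite /star !splitC. Qed.
Lemma starCL i j : star (C i) (L j) = (i == j). Proof. by rewrite /star splitC splitL. Qed.
Lemma starLC i j : star (L i) (C j) = (i == j). Proof. by rewrite /star splitC splitL. Qed.
Lemma starLL i j : star (L i) (L j) = false. Proof. by rewrite /star !splitL. Qed.

Lemma eqCC i j : (C i == C j) = (i == j). Proof. exact: (inj_eq (@lshift_inj k k)). Qed.
Lemma eqLL i j : (L i == L j) = (i == j). Proof. exact: (inj_eq (@rshift_inj k k)). Qed.
Lemma eqCL i j : (C i == L j) = false.
Proof. by apply/eqP => /(congr1 val) /=; have := ltn_ord i; lia. Qed.
Lemma eqLC i j : (L i == C j) = false. Proof. by rewrite eq_sym eqCL. Qed.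

Definition starE := (starCC, starCL, starLC, starLL, eqCC, eqLL, eqCL, eqLC).

Lemma node_ind (P : 'I_(k + k) -> Prop) :
  (forall i, P (C i)) -> (forall i, P (L i)) -> forall x, P x.
Proof. by move=> HC HL x; rewrite -(splitK x); case: (split x). Qed.

Lemma star_sym : symmetric (@star k).
Proof.
by move=> x y; move: x; apply: node_ind => i; move: y; apply: node_ind => j;
  rewrite !starE // eq_sym.
Qed.

Lemma star_irr x : ~~ star x x.
Proof. by move: x; apply: node_ind => i; rewrite !starE ?eqxx. Qed.

Lemma starL i x : star (L i) x = (x == C i).
Proof. by move: x; apply: node_ind => j; rewrite !starE // eq_sym. Qed.

Definition hub x : 'I_k := match split x with inl i | inr i => i end.
Definition is_leaf x : nat := if split x is inr _ then 1%N else 0%N.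

Lemma hubC i : hub (C i) = i. Proof. by rewrite /hub splitC. Qed.
Lemma hubL i : hub (L i) = i. Proof. by rewrite /hub splitL. Qed.
Lemma is_leafC i : is_leaf (C i) = 0%N. Proof. by rewrite /is_leaf splitC. Qed.
Lemma is_leafL i : is_leaf (L i) = 1%N. Proof. by rewrite /is_leaf splitL. Qed.

Definition hubE := (hubC, hubL, is_leafC, is_leafL).

(* The distance in the star: a leaf needs one step to its hub, and distinct
   hubs are adjacent; used as a potential bounding distances from below. *)
Definition star_pot x y : nat :=
  if x == y then 0%N else (is_leaf x + is_leaf y + (hub x != hub y))%N.

Lemma star_pot_edge x v y : star x v -> (star_pot x y <= (star_pot v y).+1)%N.
Proof.
rewrite /star_pot; move: x; apply: node_ind => i; move: v; apply: node_ind => j;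
  move: y; apply: node_ind => l; rewrite !starE !hubE; eqcases.
Qed.

Lemma star_pot_le x y : (star_pot x y <= 3)%N.
Proof.
rewrite /star_pot; case: (x == y) => //; case: (hub x != hub y); rewrite /is_leaf.
all: by case: (split x); case: (split y).
Qed.

Lemma star_dist_lb x y : (2 <= k)%N -> (star_pot x y <= dist (@star k) x y)%N.
Proof.
move=> k2; apply: dist_lb; [by move=> z; rewrite /star_pot eqxx | exact: star_pot_edge |].
by apply: leq_trans (star_pot_le x y) _; lia.
Qed.

Lemma star_avoid x y z : y != x -> z != x -> C (hub y) != x -> C (hub z) != x ->
  connect (avoid (@star k) x) y z.
Proof.
move=> yx zx cy cz; apply: (@connect_trans _ _ (C (hub y))).
  move: y yx cy; apply: node_ind => i yx; rewrite hubE => cx; first exact: connect0.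
  by apply: avoid_edge; rewrite // starE.
apply: (@connect_trans _ _ (C (hub z))).
  have [->|ne] := eqVneq (hub y) (hub z); first exact: connect0.
  by apply: avoid_edge => //; rewrite starE.
move: z zx cz; apply: node_ind => i zx; rewrite hubE => cx; first exact: connect0.
by apply: avoid_edge; rewrite // star_sym starE.
Qed.

End Star.

Lemma star_simple k : simple_graph (@star k).
Proof. by split; [exact: star_sym | exact: star_irr]. Qed.

Lemma star_is_k_star k : k_star k (@star k).
Proof.
set Cs := [set C i | i in 'I_k].
have inC i : C i \in Cs by apply: imset_f.
have ninL i : L i \notin Cs by apply/imsetP => [[j _ /eqP]]; rewrite eqLC.
have leaves1 i : leaves (@star k) Cs (C i) = 1%N.
  rewrite /leaves (_ : [set l | (l \notin Cs) && star (C i) l] = [set L i]) ?cards1 //.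
  apply/setP; apply: node_ind => j; rewrite !inE ?inC ?ninL /= !starE // eq_sym.
exists Cs; split.
- by rewrite card_imset ?card_ord //; exact: lshift_inj.
- by move=> u v /imsetP[i _ ->] /imsetP[j _ ->]; rewrite starE eqCC.
- apply: node_ind => i; first by rewrite inC.
  by move=> _; exists (C i) => // v; rewrite starL.
- by move=> cc /imsetP[i _ ->]; rewrite leaves1.
- by move=> cc cc' /imsetP[i _ ->] /imsetP[j _ ->]; rewrite !leaves1.
Qed.

(* If D is a distance potential for h (zero on the diagonal, growing by at most
   one along edges), then add_pot D a b is one for h with the link ab added. *)
Definition add_pot n (D : 'I_n -> 'I_n -> nat) (a b : 'I_n) x y : nat :=
  minn (D x y) (minn (D x a + 1 + D b y) (D x b + 1 + D a y)).

Lemma add_pot_diag n (D : 'I_n -> 'I_n -> nat) a b :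
  (forall y, D y y = 0%N) -> forall y, add_pot D a b y y = 0%N.
Proof. by move=> D0 y; rewrite /add_pot D0 min0n. Qed.

Lemma add_pot_edge n (h : rel 'I_n) D a b :
  (forall y, D y y = 0%N) -> (forall x v y, h x v -> (D x y <= (D v y).+1)%N) ->
  forall x v y, add_link h a b x v -> (add_pot D a b x y <= (add_pot D a b v y).+1)%N.
Proof.
move=> D0 Dh x v y; rewrite /add_link /add_pot.
case/or3P=> [hxv|/andP[/eqP-> /eqP->]|/andP[/eqP-> /eqP->]].
- by have := Dh _ _ y hxv; have := Dh _ _ a hxv; have := Dh _ _ b hxv; lia.
- by have := D0 a; have := D0 b; lia.
- by have := D0 a; have := D0 b; lia.
Qed.

(** * The two deviations from the star *)

Section Deviations.
Variables (k : nat) (p q : 'I_k).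
Implicit Types (i j : 'I_k) (x y z : 'I_(k + k)).

Definition star_add : rel 'I_(k + k) := add_link (@star k) (L p) (L q).
Definition star_del : rel 'I_(k + k) := del_link (@star k) (C p) (C q).

Lemma star_sub_add : subrel (@star k) star_add.
Proof. by move=> x y h; rewrite /star_add /add_link h. Qed.

Lemma star_add_pq : star_add (L p) (L q).
Proof. by rewrite /star_add /add_link !eqxx orbT. Qed.

Lemma star_add_dist_lb x y : (2 <= k)%N ->
  (add_pot (@star_pot k) (L p) (L q) x y <= dist star_add x y)%N.
Proof.
have D0 z : star_pot z z = 0%N by rewrite /star_pot eqxx.
move=> k2; apply: dist_lb.
- exact: add_pot_diag.
- by apply: add_pot_edge => //; exact: star_pot_edge.
- by apply: leq_trans (geq_minl _ _) _; apply: leq_trans (star_pot_le x y) _; lia.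
Qed.

Lemma star_delL i x : star_del (L i) x = (x == C i).
Proof. by rewrite /star_del /del_link starL !starE /= ?andbF ?andbT. Qed.

Lemma star_delCC i j : star_del (C i) (C j) =
  (i != j) && ~~ ((i == p) && (j == q) || (i == q) && (j == p)).
Proof. by rewrite /star_del /del_link !starE. Qed.

Lemma star_delCL i j : star_del (C i) (L j) = (i == j).
Proof. by rewrite /star_del /del_link !starE /= ?andbF ?andbT. Qed.

Lemma star_del_sym : symmetric star_del.
Proof.
move=> x y; rewrite /star_del /del_link star_sym; congr (_ && ~~ _).
by rewrite orbC; congr (_ || _); rewrite andbC.
Qed.

Definition del_pot x y : nat :=
  if x == y then 0%N else (is_leaf x + is_leaf y +
    (if hub x == hub y then 0 else
     if ((hub x == p) && (hub y == q)) || ((hub x == q) && (hub y == p)) then 2 else 1))%N.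

Lemma del_pot_edge x v y : star_del x v -> (del_pot x y <= (del_pot v y).+1)%N.
Proof.
rewrite /del_pot /star_del /del_link; move: x; apply: node_ind => i;
  move: v; apply: node_ind => j; move: y; apply: node_ind => l;
  rewrite !starE !hubE; eqcases.
Qed.

Lemma del_dist_lb x y : (2 <= k)%N -> (del_pot x y <= dist star_del x y)%N.
Proof.
move=> k2; apply: dist_lb; [by move=> z; rewrite /del_pot eqxx | exact: del_pot_edge |].
rewrite /del_pot; case: (x == y) => //; case: ifP => _; [|case: ifP => _].
all: by rewrite /is_leaf; case: (split x); case: (split y) => *; lia.
Qed.

End Deviations.

Lemma star_add_comm k (p q : 'I_k) : star_add q p = star_add p q.
Proof.
apply: functional_extensionality => x; apply: functional_extensionality => y.
by rewrite /star_add /add_link; congr (_ || _); rewrite orbC.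
Qed.

Section StarSums.
Variables (R : numDomainType) (k : nat).

Lemma sum_nodes (F : 'I_(k + k) -> R) :
  \sum_w F w = \sum_(i < k) F (C i) + \sum_(i < k) F (L i).
Proof. exact: big_split_ord. Qed.

Lemma sum_nodes_le (F : 'I_(k + k) -> R) (fC fL : 'I_k -> R) :
  (forall i, F (C i) <= fC i) -> (forall i, F (L i) <= fL i) ->
  \sum_w F w <= \sum_i fC i + \sum_i fL i.
Proof. by move=> hC hL; rewrite sum_nodes; apply: lerD; apply: ler_sum => i _. Qed.

Lemma sum_nodes_ge (F : 'I_(k + k) -> R) (fC fL : 'I_k -> R) :
  (forall i, fC i <= F (C i)) -> (forall i, fL i <= F (L i)) ->
  \sum_i fC i + \sum_i fL i <= \sum_w F w.
Proof. by move=> hC hL; rewrite sum_nodes; apply: lerD; apply: ler_sum => i _. Qed.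

Lemma sum_nodes_eq (F : 'I_(k + k) -> R) (fC fL : 'I_k -> R) :
  (forall i, F (C i) = fC i) -> (forall i, F (L i) = fL i) ->
  \sum_w F w = \sum_i fC i + \sum_i fL i.
Proof. by move=> hC hL; rewrite sum_nodes; congr (_ + _); apply: eq_bigr => i _. Qed.

Definition by_kind (fC fL : 'I_k -> R) (x : 'I_(k + k)) : R :=
  match split x with inl i => fC i | inr i => fL i end.

Lemma by_kindC fC fL i : by_kind fC fL (C i) = fC i.
Proof. by rewrite /by_kind splitC. Qed.
Lemma by_kindL fC fL i : by_kind fC fL (L i) = fL i.
Proof. by rewrite /by_kind splitL. Qed.

Lemma sum_by_kind fC fL : \sum_x by_kind fC fL x = \sum_i fC i + \sum_i fL i.
Proof. by apply: sum_nodes_eq => i; rewrite ?by_kindC ?by_kindL. Qed.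

End StarSums.

Section Estimates.
Variables (R : realFieldType) (b : nat -> R) (gam : R) (k : nat).
Hypothesis b_decr : forall i : nat, (0 < i)%N -> b i.+1 < b i.
Hypothesis b_pos : forall i : nat, (0 < i)%N -> 0 < b i.
Hypothesis gam_ge0 : 0 <= gam.
Hypothesis k_ge3 : (3 <= k)%N.

Let k_ge2 : (2 <= k)%N. Proof. lia. Qed.

(* All distances needed are at most 4, well below the number 2k of nodes. *)
Let dist_walk (g : rel 'I_(k + k)) m x y :
  (m <= 4)%N -> walk_len g m x y -> (dist g x y <= m)%N.
Proof. by move=> m4; apply: dist_ub; lia. Qed.

Let dist_self (g : rel 'I_(k + k)) x : (dist g x x <= 1)%N.
Proof. by apply: (@leq_trans 0) => //; apply: dist_walk => //=. Qed.

Let benefit_by_walk (g : rel 'I_(k + k)) j w m : (1 < dist g j w)%N ->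
  (m <= 4)%N -> walk_len g m j w -> b m <= benefit_term b g j w.
Proof.
by move=> d1 m4 wk; apply: benefit_term_ge => //; [exact: walk_connect wk | exact: dist_walk wk].
Qed.

Let fee_by_walk (g : rel 'I_(k + k)) j w x m : x \in Eset g j w ->
  (m <= 4)%N -> walk_len g m j w -> gam * b m <= fee_term b gam g j w.
Proof.
by move=> xE m4 wk; apply: fee_term_ge xE _ => //; [exact: walk_connect wk | exact: dist_walk wk].
Qed.

Let rent_by_walk (g : rel 'I_(k + k)) j y z m e : j \in Eset g y z ->
  (m <= 4)%N -> walk_len g m y z -> (#|Eset g y z| <= e)%N ->
  gam / e%:R * 2 * b m <= rent_term b gam g j y z.
Proof.
by move=> jE m4 wk eE; apply: rent_term_ge jE _ eE => //;
  [exact: walk_connect wk | exact: dist_walk wk].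
Qed.

Let star_leaf_hub p x : x != L p -> x != C p -> C p \in Eset (@star k) (L p) x.
Proof. by move=> xL xC; apply: Eset_leaf => //; [exact: starL | rewrite starE]. Qed.

Section StarLeaf.
Variable p : 'I_k.

Lemma star_leaf_benefit :
  \sum_w benefit_term b (@star k) (L p) w <= (k%:R - 1) * b 2%N + (k%:R - 1) * b 3%N.
Proof.
apply: le_trans (sum_nodes_le (fC := fun i => if i == p then 0 else b 2%N)
                              (fL := fun i => if i == p then 0 else b 3%N) _ _) _.
- move=> i; have [->|ip] := eqVneq i p.
    by rewrite benefit_term_near // dist_walk // walk1 // starE.
  apply: benefit_term_le => //; have := star_dist_lb (L p) (C i) k_ge2.
  by rewrite /star_pot !starE !hubE /= eq_sym (negbTE ip).
- move=> i; have [->|ip] := eqVneq i p; first by rewrite benefit_term_near ?dist_self.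
  apply: benefit_term_le => //; have := star_dist_lb (L p) (L i) k_ge2.
  by rewrite /star_pot !starE !hubE /= eq_sym (negbTE ip).
- by rewrite !sum_if1; lra.
Qed.

(* L p pays fees to C p for all its indirect connections. *)
Lemma star_leaf_fees :
  gam * ((k%:R - 1) * (b 2%N + b 3%N)) <= \sum_w fee_term b gam (@star k) (L p) w.
Proof.
apply: le_trans (sum_nodes_ge (fC := fun i => if i == p then 0 else gam * b 2%N)
                              (fL := fun i => if i == p then 0 else gam * b 3%N) _ _).
  by rewrite !sum_if1; lra.
- move=> i; have [->|ip] := eqVneq i p; first exact: fee_term_ge0.
  apply: (fee_by_walk (x := C p) (m := 2)) => //; first by rewrite star_leaf_hub ?starE.
  by apply: (walkS (C p)); [rewrite starE | apply: walk1; rewrite starE eq_sym].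
- move=> i; have [->|ip] := eqVneq i p; first exact: fee_term_ge0.
  apply: (fee_by_walk (x := C p) (m := 3)) => //; first by rewrite star_leaf_hub ?starE.
  apply: (walkS (C p)); first by rewrite starE.
  by apply: (walkS (C i)); [rewrite starE eq_sym | apply: walk1; rewrite starE].
Qed.

(* A leaf of the star is essential for no pair. *)
Lemma star_leaf_rents : rents b gam (@star k) (L p) = 0.
Proof.
apply: big1 => y _; apply: big1 => z /and3P[_ _].
have hubp x : L p != x -> C (hub x) != L p.
  by move: x; apply: node_ind => i; rewrite ?hubE ?starE.
rewrite inEset => /and3P[py pz]; rewrite star_avoid ?hubp // eq_sym //.
Qed.

Lemma star_leaf_utility c : utility b c gam (@star k) (L p) <=
  (b 1%N - c) + (k%:R - 1) * (b 2%N + b 3%N) - gam * ((k%:R - 1) * (b 2%N + b 3%N)).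
Proof.
have deg : degree (@star k) (L p) = 1%N.
  rewrite /degree (_ : [set v | star (L p) v] = [set C p]) ?cards1 //.
  by apply/setP => v; rewrite !inE starL.
have := star_leaf_benefit; have := star_leaf_fees.
by rewrite utilityE deg star_leaf_rents; lra.
Qed.

End StarLeaf.

Section AddedLeaf.
Variables p q : 'I_k.
Hypothesis pq : p != q.

(* Through its new link, L p reaches every centre while bypassing any single node. *)
Lemma star_add_leaf_centre_Eset i : Eset (star_add p q) (L p) (C i) = set0.
Proof.
have sub := @star_sub_add k p q.
apply/eqP; rewrite -subset0; apply: Eset_sub => x _ xLp xCi.
have [xCp|xCp] := eqVneq x (C p).
  subst x; rewrite eqCC in xCi; apply: (@connect_trans _ _ (L q)).
    by apply: avoid_edge; rewrite ?star_add_pq // eqLC.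
  apply: (@connect_trans _ _ (C q)).
    by apply: avoid_edge; [rewrite sub // starE | rewrite eqCC eq_sym].
  have [->|iq] := eqVneq i q; first exact: connect0.
  by apply: avoid_edge; [rewrite sub // starE eq_sym | rewrite eqCC eq_sym].
apply: (@connect_trans _ _ (C p)); first by apply: avoid_edge; rewrite 1?sub ?starE // eq_sym.
have [->|ip] := eqVneq i p; first exact: connect0.
by apply: avoid_edge; [rewrite sub // starE eq_sym | rewrite eq_sym].
Qed.

Lemma star_add_leaf_benefit : (k%:R - 1) * b 2%N + (k%:R - 2) * b 3%N <=
  \sum_w benefit_term b (star_add p q) (L p) w.
Proof.
have sub := @star_sub_add k p q.
apply: le_trans (sum_nodes_ge
   (fC := fun i => if i == p then 0 else b 2%N)
   (fL := fun i => if i == p then 0 else if i == q then 0 else b 3%N) _ _).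
  by rewrite sum_if1 sum_if2 //; lra.
- move=> i; have [->|ip] := eqVneq i p; first exact: benefit_term_ge0.
  apply: (benefit_by_walk (m := 2)) => //.
    have := star_add_dist_lb p q (L p) (C i) k_ge2.
    by rewrite /add_pot /star_pot !starE !hubE /=; eqcases; lia.
  apply: walk_mono sub _; apply: (walkS (C p)); first by rewrite starE.
  by apply: walk1; rewrite starE eq_sym.
- move=> i; have [->|ip] := eqVneq i p; first exact: benefit_term_ge0.
  have [->|iq] := eqVneq i q; first exact: benefit_term_ge0.
  apply: (benefit_by_walk (m := 3)) => //.
    have := star_add_dist_lb p q (L p) (L i) k_ge2.
    by rewrite /add_pot /star_pot !starE !hubE /=; eqcases; lia.
  apply: walk_mono sub _; apply: (walkS (C p)); first by rewrite starE.
  by apply: (walkS (C i)); [rewrite starE eq_sym | apply: walk1; rewrite starE].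
Qed.

(* L p now pays fees only towards the leaves other than L q. *)
Lemma star_add_leaf_fees :
  \sum_w fee_term b gam (star_add p q) (L p) w <= gam * ((k%:R - 2) * b 3%N).
Proof.
apply: le_trans (sum_nodes_le (fC := fun i => 0)
   (fL := fun i => if i == p then 0 else if i == q then 0 else gam * b 3%N) _ _) _.
- by move=> i; rewrite fee_term_0 // star_add_leaf_centre_Eset.
- move=> i; have [->|ip] := eqVneq i p; first by rewrite fee_term_0 // Eset_refl.
  have [->|iq] := eqVneq i q; first by rewrite fee_term_0 // Eset_adj // star_add_pq.
  apply: fee_term_le => //; have := star_add_dist_lb p q (L p) (L i) k_ge2.
  by rewrite /add_pot /star_pot !starE !hubE /=; eqcases; lia.
- by rewrite sum_if2 // big1 //; lra.
Qed.

Lemma star_add_leaf_utility c :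
  2%:R * (b 1%N - c) + (k%:R - 1) * b 2%N + (k%:R - 2) * b 3%N
    - gam * ((k%:R - 2) * b 3%N) <= utility b c gam (star_add p q) (L p).
Proof.
have deg : degree (star_add p q) (L p) = 2%N.
  rewrite /degree (_ : [set v | star_add p q (L p) v] = [set C p; L q]).
    by rewrite cards2 eqCL.
  by apply/setP; apply: node_ind => i; rewrite !inE /star_add /add_link !starE; eqcases.
have := star_add_leaf_benefit; have := star_add_leaf_fees.
have := @rents_ge0 _ b gam _ (star_add p q) b_pos gam_ge0 (L p).
by rewrite utilityE deg; lra.
Qed.

End AddedLeaf.

Section StarCentre.
Variable p : 'I_k.

Lemma star_centre_degree : ((degree (@star k) (C p))%:R : R) = k%:R.
Proof.
rewrite degreeE (sum_nodes_eq (fC := fun i => if i == p then 0 else 1)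
                              (fL := fun i => if i == p then 1 else 0)).
- by rewrite sum_if1 sum_pt; ring.
- by move=> i; rewrite starE eq_sym; case: (i == p).
- by move=> i; rewrite starE eq_sym.
Qed.

Lemma star_centre_benefit :
  \sum_w benefit_term b (@star k) (C p) w <= (k%:R - 1) * b 2%N.
Proof.
apply: le_trans (sum_nodes_le (fC := fun i => 0)
                              (fL := fun i => if i == p then 0 else b 2%N) _ _) _.
- move=> i; have [->|ip] := eqVneq i p; first by rewrite benefit_term_near ?dist_self.
  by rewrite benefit_term_near // dist_walk // walk1 // starE eq_sym.
- move=> i; have [->|ip] := eqVneq i p.
    by rewrite benefit_term_near // dist_walk // walk1 // starE.
  apply: benefit_term_le => //; have := star_dist_lb (C p) (L i) k_ge2.
  by rewrite /star_pot !starE !hubE /= eq_sym (negbTE ip).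
- by rewrite sum_if1 big1 //; lra.
Qed.

(* C p pays a fee to C i for reaching the leaf L i. *)
Lemma star_centre_fees :
  gam * ((k%:R - 1) * b 2%N) <= \sum_w fee_term b gam (@star k) (C p) w.
Proof.
apply: le_trans (sum_nodes_ge (fC := fun i => 0)
                              (fL := fun i => if i == p then 0 else gam * b 2%N) _ _).
  by rewrite sum_if1 big1 //; lra.
- by move=> i; exact: fee_term_ge0.
- move=> i; have [->|ip] := eqVneq i p; first exact: fee_term_ge0.
  apply: (fee_by_walk (x := C i) (m := 2)) => //.
    rewrite Eset_sym; last exact: star_sym.
    by rewrite star_leaf_hub ?starE // eq_sym.
  by apply: (walkS (C i)); [rewrite starE eq_sym | apply: walk1; rewrite starE].
Qed.

Lemma star_centre_Eset y z : y != L p -> z != L p -> C p \notin Eset (@star k) y z.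
Proof.
have hubp x : x != L p -> C p != x -> C (hub x) != C p.
  by move: x; apply: node_ind => i; rewrite ?hubE ?starE; eqcases.
move=> yp zp; rewrite inEset; apply/negP => /and3P[py pz].
by rewrite star_avoid ?hubp // eq_sym.
Qed.

(* Bounds on the rent C p collects from the pair of L p with z: z is a centre
   at distance 2, or a leaf at distance 3 with two essential centres. *)
Definition star_centre_rent : 'I_(k + k) -> R :=
  by_kind (fun i => if i == p then 0 else gam / 1%:R * 2 * b 2%N)
          (fun i => if i == p then 0 else gam / 2%:R * 2 * b 3%N).

Lemma star_centre_rent_from_leaf z : z != L p ->
  rent_term b gam (@star k) (C p) (L p) z <= star_centre_rent z.
Proof.
rewrite /star_centre_rent; move: z; apply: node_ind => i zp; rewrite ?by_kindC ?by_kindL.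
- have [->|ip] := eqVneq i p.
    by rewrite rent_term_0 // inEset eqxx /= andbF.
  apply: rent_term_le => //; last by apply/card_gt0P; exists (C p); rewrite star_leaf_hub ?starE.
  have := star_dist_lb (L p) (C i) k_ge2.
  by rewrite /star_pot !starE !hubE /= eq_sym (negbTE ip).
- have [ip|ip] := eqVneq i p; first by rewrite ip eqxx in zp.
  apply: rent_term_le => //.
    have := star_dist_lb (L p) (L i) k_ge2.
    by rewrite /star_pot !starE !hubE /= eq_sym (negbTE ip).
  have -> : 2%N = #|[set C p; C i]| by rewrite cards2 eqCC eq_sym ip.
  apply: subset_leq_card; apply/subsetP => x /set2P[] ->.
    by rewrite star_leaf_hub ?starE.
  rewrite Eset_sym; last exact: star_sym.
  by rewrite star_leaf_hub ?starE // eq_sym.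
Qed.

Lemma star_centre_rents :
  rents b gam (@star k) (C p) <= gam * ((k%:R - 1) * (2%:R * b 2%N + b 3%N)).
Proof.
rewrite rents_pairs; apply: le_trans (sum_pairs_le (a := L p) (H := star_centre_rent) _) _.
  move=> y z yz; rewrite -/(rent_term _ _ _ _ _ _).
  have [yp|yp] := eqVneq y (L p).
    subst y; apply: star_centre_rent_from_leaf.
    by apply: contraTneq yz => ->; rewrite ltnn.
  have [zp|zp] := eqVneq z (L p); last by rewrite rent_term_0 // star_centre_Eset.
  subst z; rewrite rent_term_sym; last exact: star_sym.
  exact: star_centre_rent_from_leaf.
rewrite sum_ne0 /star_centre_rent ?by_kindL ?eqxx // sum_by_kind !sum_if1.
by rewrite divr1; lra.
Qed.

Lemma star_centre_utility c : utility b c gam (@star k) (C p) <=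
  k%:R * (b 1%N - c) + (k%:R - 1) * b 2%N - gam * ((k%:R - 1) * b 2%N)
    + gam * ((k%:R - 1) * (2%:R * b 2%N + b 3%N)).
Proof.
have := star_centre_benefit; have := star_centre_fees; have := star_centre_rents.
by rewrite utilityE star_centre_degree; lra.
Qed.

End StarCentre.

Ltac del_edge := rewrite ?star_delL ?star_delCC ?star_delCL ?starE; eqcases.

Lemma star_del_centre_degree (p q : 'I_k) : p != q ->
  ((degree (star_del p q) (C p))%:R : R) = k%:R - 1.
Proof.
move=> pq; rewrite degreeE (sum_nodes_eq
  (fC := fun i => if i == p then 0 else if i == q then 0 else 1)
  (fL := fun i => if i == p then 1 else 0)).
- by rewrite sum_if2 // sum_pt; ring.
- by move=> i; del_edge.
- by move=> i; del_edge.
Qed.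

(* Detours through a third centre s. *)
Lemma star_del_walk_Cq (p q s : 'I_k) : p != s -> q != s ->
  walk_len (star_del p q) 2 (C p) (C q).
Proof. by move=> ps qs; apply: (walkS (C s)); [del_edge | apply: walk1; del_edge]. Qed.

Lemma star_del_walk_Lq (p q s : 'I_k) : p != s -> q != s ->
  walk_len (star_del p q) 3 (C p) (L q).
Proof.
move=> ps qs; apply: (walkS (C s)); first by del_edge.
by apply: (walkS (C q)); [del_edge | apply: walk1; del_edge].
Qed.

Lemma star_del_walk_Li (p q i : 'I_k) : i != p -> i != q ->
  walk_len (star_del p q) 2 (C p) (L i).
Proof. by move=> ip iq; apply: (walkS (C i)); [del_edge | apply: walk1; del_edge]. Qed.

Let del_dist (p q : 'I_k) x y m :
  (m <= del_pot p q x y)%N -> (m <= dist (star_del p q) x y)%N.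
Proof. by move/leq_trans; apply; exact: del_dist_lb. Qed.

Lemma star_del_centre_benefit (p q s : 'I_k) : p != q -> p != s -> q != s ->
  (k%:R - 1) * b 2%N + b 3%N <= \sum_w benefit_term b (star_del p q) (C p) w.
Proof.
move=> pq ps qs; apply: le_trans (sum_nodes_ge
   (fC := fun i => if i == q then b 2%N else 0)
   (fL := fun i => if i == p then 0 else if i == q then b 3%N else b 2%N) _ _).
  by rewrite sum_if2 // sum_pt; lra.
- move=> i; have [->|iq] := eqVneq i q; last exact: benefit_term_ge0.
  apply: benefit_by_walk (star_del_walk_Cq ps qs) => //; apply: del_dist.
  by rewrite /del_pot !starE !hubE /=; eqcases.
- move=> i; have [->|ip] := eqVneq i p; first exact: benefit_term_ge0.
  have [->|iq] := eqVneq i q.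
    apply: benefit_by_walk (star_del_walk_Lq ps qs) => //; apply: del_dist.
    by rewrite /del_pot !starE !hubE /=; eqcases.
  apply: benefit_by_walk (star_del_walk_Li ip iq) => //; apply: del_dist.
  by rewrite /del_pot !starE !hubE /=; eqcases.
Qed.

Lemma star_del_centre_fees (p q : 'I_k) : p != q ->
  \sum_w fee_term b gam (star_del p q) (C p) w <= gam * ((k%:R - 1) * b 2%N + b 3%N).
Proof.
move=> pq; apply: le_trans (sum_nodes_le
   (fC := fun i => if i == q then gam * b 2%N else 0)
   (fL := fun i => if i == p then 0 else if i == q then gam * b 3%N else gam * b 2%N) _ _) _.
- move=> i; have [->|iq] := eqVneq i q.
    apply: fee_term_le => //; apply: del_dist.
    by rewrite /del_pot !starE !hubE /=; eqcases.
  have [->|ip] := eqVneq i p; first by rewrite fee_term_0 // Eset_refl.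
  by rewrite fee_term_0 // Eset_adj //; del_edge.
- move=> i; have [->|ip] := eqVneq i p; first by rewrite fee_term_0 // Eset_adj //; del_edge.
  by case: eqVneq => [->|iq]; apply: fee_term_le => //; apply: del_dist;
    rewrite /del_pot !starE !hubE /=; eqcases.
- by rewrite sum_if2 // sum_pt; lra.
Qed.

(* Lower bounds on the rent C p collects from the pair of its leaf L p with z:
   C q is now 3 steps away (via C s) with at most C p, C s essential; another
   centre is 2 steps away with only C p essential; L q is 4 steps away; another
   leaf L i is 3 steps away with only C p, C i essential. *)
Definition star_del_centre_rent (p q : 'I_k) : 'I_(k + k) -> R :=
  by_kind (fun i => if i == p then 0
                    else if i == q then gam / 2%:R * 2 * b 3%N else gam / 1%:R * 2 * b 2%N)
          (fun i => if i == p then 0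
                    else if i == q then gam / (k + k)%:R * 2 * b 4%N else gam / 2%:R * 2 * b 3%N).

Ltac avoid_step v := apply: (@connect_trans _ _ v);
  first (apply: avoid_edge; [del_edge | by rewrite eq_sym]).
Ltac avoid_last := apply: avoid_edge; [del_edge | by rewrite eq_sym].

Lemma star_del_rent_from_leaf (p q s : 'I_k) z : p != q -> p != s -> q != s -> z != L p ->
  star_del_centre_rent p q z <= rent_term b gam (star_del p q) (C p) (L p) z.
Proof.
move=> pq ps qs; rewrite /star_del_centre_rent.
have Cp_essential z' : z' != L p -> z' != C p -> C p \in Eset (star_del p q) (L p) z'.
  by move=> *; apply: Eset_leaf => //; [exact: star_delL | rewrite starE].
move: z; apply: node_ind => i zp; rewrite ?by_kindC ?by_kindL /=.
- have [->|ip] := eqVneq i p; first exact: rent_term_ge0.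
  have [->|iq] := eqVneq i q.
    have wk : walk_len (star_del p q) 3 (L p) (C q).
      by apply: (walkS (C p)); [del_edge | exact: star_del_walk_Cq ps qs].
    apply: rent_by_walk wk _; rewrite ?Cp_essential ?starE // 1?eq_sym //.
    apply: (@leq_trans #|[set C p; C s]|); last by rewrite cards2; case: (_ != _).
    apply: subset_leq_card; apply: Eset_sub => x; rewrite !inE negb_or => /andP[xp xs] xy xz.
    by avoid_step (C p); avoid_step (C s); avoid_last.
  have wk : walk_len (star_del p q) 2 (L p) (C i).
    by apply: (walkS (C p)); [del_edge | apply: walk1; del_edge].
  apply: rent_by_walk wk _; rewrite ?Cp_essential ?starE // 1?eq_sym //.
  rewrite -(cards1 (C p)); apply: subset_leq_card; apply: Eset_sub => x.
  by rewrite !inE => xp xy xz; avoid_step (C p); avoid_last.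
- have [ip|ip] := eqVneq i p; first by rewrite ip eqxx in zp.
  have [->|iq] := eqVneq i q.
    have wk : walk_len (star_del p q) 4 (L p) (L q).
      by apply: (walkS (C p)); [del_edge | exact: star_del_walk_Lq ps qs].
    apply: rent_by_walk wk _; rewrite ?Cp_essential ?starE // 1?eq_sym //.
    by rewrite -[X in (_ <= X)%N](card_ord (k + k)) max_card.
  have wk : walk_len (star_del p q) 3 (L p) (L i).
    by apply: (walkS (C p)); [del_edge | exact: star_del_walk_Li].
  apply: rent_by_walk wk _; rewrite ?Cp_essential ?starE // 1?eq_sym //.
  apply: (@leq_trans #|[set C p; C i]|); last by rewrite cards2; case: (_ != _).
  apply: subset_leq_card; apply: Eset_sub => x; rewrite !inE negb_or => /andP[xp xi] xy xz.
  by avoid_step (C p); avoid_step (C i); avoid_last.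
Qed.

Lemma star_del_centre_rents (p q s : 'I_k) : p != q -> p != s -> q != s ->
  gam * ((k%:R - 2) * (2%:R * b 2%N + b 3%N) + b 3%N) + gam / (k + k)%:R * 2 * b 4%N
    <= rents b gam (star_del p q) (C p).
Proof.
move=> pq ps qs; rewrite rents_pairs.
apply: le_trans (sum_pairs_ge (a := L p) (H := star_del_centre_rent p q) _).
  rewrite sum_ne0 /star_del_centre_rent ?by_kindL ?eqxx // sum_by_kind !sum_if2 //.
  by rewrite divr1; lra.
move=> y z yz; rewrite -/(rent_term _ _ _ _ _ _).
have [yp|yp] := eqVneq y (L p).
  subst y; apply: (star_del_rent_from_leaf pq ps qs).
  by apply: contraTneq yz => ->; rewrite ltnn.
have [zp|zp] := eqVneq z (L p); last exact: rent_term_ge0.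
subst z; rewrite rent_term_sym; last exact: star_del_sym.
exact: (star_del_rent_from_leaf pq ps qs).
Qed.

Lemma star_del_centre_utility c (p q s : 'I_k) : p != q -> p != s -> q != s ->
  (k%:R - 1) * (b 1%N - c) + ((k%:R - 1) * b 2%N + b 3%N) - gam * ((k%:R - 1) * b 2%N + b 3%N)
  + gam * ((k%:R - 2) * (2%:R * b 2%N + b 3%N) + b 3%N) + gam / (k + k)%:R * 2 * b 4%N
  <= utility b c gam (star_del p q) (C p).
Proof.
move=> pq ps qs; have := star_del_centre_benefit pq ps qs.
have := star_del_centre_fees pq; have := star_del_centre_rents pq ps qs.
by rewrite utilityE star_del_centre_degree //; lra.
Qed.

End Estimates.

Section StableStar.
Variables (R : realFieldType) (b : nat -> R) (c gam : R) (k : nat).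
Hypothesis b_decr : forall i : nat, (0 < i)%N -> b i.+1 < b i.
Hypothesis b_pos : forall i : nat, (0 < i)%N -> 0 < b i.
Hypothesis gam_ge0 : 0 <= gam.
Hypothesis k_ge3 : (3 <= k)%N.
Hypothesis stable : pairwise_stable b c gam (@star k).

Let p : 'I_k := Ordinal (ltn_trans (isT : (0 < 2)%N) k_ge3).
Let q : 'I_k := Ordinal (ltn_trans (isT : (1 < 2)%N) k_ge3).
Let s : 'I_k := Ordinal k_ge3.

(* (V): linking two leaves, which benefits both equally, must not pay. *)
Lemma leaf_link_unprofitable :
  (b 1%N - c) - b 3%N + gam * ((k%:R - 1) * b 2%N + b 3%N) <= 0.
Proof.
have pq : p != q by []; have qp : q != p by [].
have gain_p := star_add_leaf_utility b_decr b_pos gam_ge0 k_ge3 pq c.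
have gain_q := star_add_leaf_utility b_decr b_pos gam_ge0 k_ge3 qp c.
rewrite star_add_comm in gain_q.
have old_p := star_leaf_utility b_decr b_pos gam_ge0 k_ge3 p c.
have old_q := star_leaf_utility b_decr b_pos gam_ge0 k_ge3 q c.
have Lpq : L p != L q by rewrite eqLL.
have add_ok := stable.2 (L p) (L q) Lpq (negbT (starLL p q)).
rewrite leNgt; apply/negP => V; rewrite -/(star_add p q) in add_ok.
by have := add_ok ltac:(lra); lra.
Qed.

(* (W): cutting the link between two centres must not pay. *)
Lemma centre_cut_unprofitable :
  c - b 1%N + b 3%N - gam * (2%:R * b 2%N + b 3%N) + gam / (k + k)%:R * 2 * b 4%N <= 0.
Proof.
have pq : p != q by []; have ps : p != s by []; have qs : q != s by [].
have new := star_del_centre_utility b_decr b_pos gam_ge0 k_ge3 c pq ps qs.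
have old := star_centre_utility b_decr b_pos gam_ge0 k_ge3 p c.
have [cut_ok _] := stable.1 (C p) (C q) (etrans (starCC p q) pq).
by rewrite -/(star_del p q) in cut_ok; lra.
Qed.

End StableStar.

Theorem lemma1 (R : realFieldType) (b : nat -> R) (c gam : R) (k : nat) :
  (3 <= k)%N ->
  (forall i : nat, (0 < i)%N -> b i.+1 < b i) ->
  (forall i : nat, (0 < i)%N -> 0 < b i) ->
  0 <= gam -> gam < 1 ->
  (forall (n : nat) (g : rel 'I_n), (2 * k <= n)%N ->
     simple_graph g -> k_star k g -> pairwise_stable b c gam g) ->
  gam = 0 /\ c = b 1%N - b 3%N.
Proof.
move=> k_ge3 b_decr b_pos gam_ge0 _ every_star_stable.
have stable : pairwise_stable b c gam (@star k).
  by apply: every_star_stable; [lia | exact: star_simple | exact: star_is_k_star].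
have V := leaf_link_unprofitable b_decr b_pos gam_ge0 k_ge3 stable.
have W := centre_cut_unprofitable b_decr b_pos gam_ge0 k_ge3 stable.
(* Adding (V) and (W) leaves gam ((k-3) b2 + b4 / k) <= 0. *)
have pos_b2 : 0 <= gam * ((k%:R - 3) * b 2%N).
  by rewrite !mulr_ge0 ?subr_ge0 ?ler_nat // ltW // b_pos.
have pos_b4 : 0 < 2%:R * b 4%N / (k + k)%:R.
  by rewrite !mulr_gt0 ?invr_gt0 ?ltr0n ?b_pos //; lia.
have gam0 : gam = 0.
  apply/eqP; rewrite eq_le gam_ge0 andbT -(pmulr_lle0 _ pos_b4); lra.
by split => //; move: V W; rewrite gam0 !mul0r; lra.
Qed.
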